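(* Let $\mathcal C$ be a category of $\mathcal A$-coloured noncrossing partitions, let $w$ be a word on $\mathcal A$, and let $p,q\in\mathcal C(w,w)$ be projective partitions with no through-blocks. Then $p$ and $q$ are equivalent in $\mathcal C$.
   Context: Colour sets and partitions: a colour set is a set $\mathcal A$ with an involution $a\mapsto a^{-1}$. For words $w,w'$ on $\mathcal A$, an element of $P^{\mathcal A}(w,w')$ is a partition of $|w|+|w'|$ points drawn as an upper row coloured (left to right) by $w$ and a lower row coloured by $w'$; its subsets are blocks. It is noncrossing if there are no four points $k_1<k_2<k_3<k_4$ (ordering: upper row left to right, then lower row right to left) with $k_1,k_3$ in one block and $k_2,k_4$ in a different block. Category operations: tensor product, composition $qp$ (stack $q$ below $p$, identify middle rows, erase middle points and closed loops), adjoint $p^*$ (reflection), rotation (moving an extreme point to the other row and replacing its colour $a$ by $a^{-1}$). A category of noncrossing partitions is a family $\mathcal C(w,w')\subset NC^{\mathcal A}(w,w')$ stable under these operations and containing $\pi(a,a)$ for all $a$. A through-block is a block containing both upper and lower points. A partition $p\in P(w,w)$ is projective if $pp=p=p^*$. Two projective partitions $p,q$ are equivalent in $\mathcal C$ if there is $r\in\mathcal C$ with $r^*r=p$ and $rr^*=q$. *)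

From HB Require Import structures.
From mathcomp Require Import all_boot.
Set Implicit Arguments. Unset Strict Implicit. Unset Printing Implicit Defensive.

(* Point numbering for an element of P(w,w'): index i < size w is the i-th
   upper point (left to right); index size w + j is the j-th lower point
   (left to right). *)
Definition part (A : Type) (w w' : seq A) := {set {set 'I_(size w + size w')}}.

Definition nrel N (P : {set {set 'I_N}}) (i j : nat) : bool :=
  match (insub i : option 'I_N), (insub j : option 'I_N) with
  | Some x, Some y => y \in pblock P x
  | _, _ => false
  end.

Definition of_rel N (r : nat -> nat -> bool) : {set {set 'I_N}} :=
  [set [set y : 'I_N | r (val x) (val y)] | x : 'I_N].

Section Ops.
Variable A : Type.

Definition tens (w1 w1' w2 w2' : seq A) (p : part w1 w1') (q : part w2 w2')
  : part (w1 ++ w2) (w1' ++ w2') :=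
  let k1 := size w1 in let k2 := size w2 in let l1 := size w1' in
  let src x := if x < k1 then (true, x)
               else if x < k1 + k2 then (false, x - k1)
               else if x < k1 + k2 + l1 then (true, k1 + (x - (k1 + k2)))
               else (false, k2 + (x - (k1 + k2 + l1))) in
  of_rel _ (fun x y => ((src x).1 == (src y).1) &&
     (if (src x).1 then nrel p (src x).2 (src y).2
      else nrel q (src x).2 (src y).2)).

Definition adj (w w' : seq A) (p : part w w') : part w' w :=
  let k := size w in let l := size w' in
  let f x := if x < l then k + x else x - l in
  of_rel _ (fun x y => nrel p (f x) (f y)).

(* composition  qp : stack q below p, identify the middle rows, erase the
   middle points and the closed loops *)
Definition partcomp (w w' w'' : seq A) (p : part w w') (q : part w' w'')
  : part w w'' :=
  let k := size w in let l := size w' in let m := size w'' in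
  let e := fun x y : 'I_(k + l + m) =>
     [&& x < k + l, y < k + l & nrel p x y] ||
     [&& k <= x, k <= y & nrel q (x - k) (y - k)] in
  let emb x := if x < k then x else x + l in
  of_rel _ (fun x y =>
    match (insub (emb x) : option 'I_(k + l + m)),
          (insub (emb y) : option 'I_(k + l + m)) with
    | Some a, Some b => connect e a b
    | _, _ => false
    end).

Definition rotUL (inv : A -> A) (a : A) (w w' : seq A) (p : part (a :: w) w')
  : part w (inv a :: w') :=
  let k := size w in
  let f x := if x < k then x.+1 else if x == k then 0 else x in
  of_rel _ (fun x y => nrel p (f x) (f y)).

Definition rotUR (inv : A -> A) (a : A) (w w' : seq A) (p : part (rcons w a) w')
  : part w (rcons w' (inv a)) :=
  let k := size w in let l := size w' in
  let f x := if x < k then x else if x < k + l then x.+1 else k in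
  of_rel _ (fun x y => nrel p (f x) (f y)).

Definition rotLL (inv : A -> A) (a : A) (w w' : seq A) (p : part w (a :: w'))
  : part (inv a :: w) w' :=
  let k := size w in
  let f x := if x == 0 then k else if x <= k then x.-1 else x in
  of_rel _ (fun x y => nrel p (f x) (f y)).

Definition rotLR (inv : A -> A) (a : A) (w w' : seq A) (p : part w (rcons w' a))
  : part (rcons w (inv a)) w' :=
  let k := size w in let l := size w' in
  let f x := if x < k then x else if x == k then k + l else x.-1 in
  of_rel _ (fun x y => nrel p (f x) (f y)).

Definition idpart (a : A) : part [:: a] [:: a] := [set [set: 'I_2]].

(* cyclic position: upper row left to right, then lower row right to left *)
Definition pos (k l x : nat) : nat := if x < k then x else (k + k + l).-1 - x.

Definition noncrossing (w w' : seq A) (p : part w w') : Prop :=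
  partition p [set: 'I_(size w + size w')] /\
  forall x1 x2 x3 x4 : 'I_(size w + size w'),
    [&& pos (size w) (size w') x1 < pos (size w) (size w') x2,
        pos (size w) (size w') x2 < pos (size w) (size w') x3 &
        pos (size w) (size w') x3 < pos (size w) (size w') x4] ->
    pblock p x1 = pblock p x3 -> pblock p x2 = pblock p x4 ->
    pblock p x1 = pblock p x2.

Record is_category (inv : A -> A) (C : forall w w' : seq A, part w w' -> Prop)
  : Prop := {
  cat_nc : forall w w' (p : part w w'), C w w' p -> noncrossing p;
  cat_tens : forall w1 w1' w2 w2' (p : part w1 w1') (q : part w2 w2'),
      C w1 w1' p -> C w2 w2' q -> C (w1 ++ w2) (w1' ++ w2') (tens p q);
  cat_comp : forall w w' w'' (p : part w w') (q : part w' w''),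
      C w w' p -> C w' w'' q -> C w w'' (partcomp p q);
  cat_adj : forall w w' (p : part w w'), C w w' p -> C w' w (adj p);
  cat_rotUL : forall a w w' (p : part (a :: w) w'),
      C (a :: w) w' p -> C w (inv a :: w') (rotUL inv p);
  cat_rotUR : forall a w w' (p : part (rcons w a) w'),
      C (rcons w a) w' p -> C w (rcons w' (inv a)) (rotUR inv p);
  cat_rotLL : forall a w w' (p : part w (a :: w')),
      C w (a :: w') p -> C (inv a :: w) w' (rotLL inv p);
  cat_rotLR : forall a w w' (p : part w (rcons w' a)),
      C w (rcons w' a) p -> C (rcons w (inv a)) w' (rotLR inv p);
  cat_id : forall a, C [:: a] [:: a] (idpart a)
}.

Definition has_through_block (w w' : seq A) (p : part w w') : Prop :=
  exists2 B, B \in p &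
    (exists x : 'I_(size w + size w'), (x \in B) && (x < size w)) /\
    (exists y : 'I_(size w + size w'), (y \in B) && (size w <= y)).

Definition projective (w : seq A) (p : part w w) : Prop :=
  partcomp p p = p /\ adj p = p.

Definition equivalent (C : forall w w' : seq A, part w w' -> Prop)
  (w v : seq A) (p : part w w) (q : part v v) : Prop :=
  exists r : part w v, C w v r /\ partcomp r (adj r) = p /\ partcomp (adj r) r = q.

End Ops.

From HB Require Import structures.
From mathcomp Require Import all_boot zify.
Set Implicit Arguments. Unset Strict Implicit. Unset Printing Implicit Defensive.

(* A partition in P(w,w) without through-blocks is just a partition of the
   upper row placed next to a partition of the lower row.  Composing such
   partitions keeps the upper row of the first and the lower row of the second
   factor, and the adjoint swaps the two rows.  So for r = qp we get
   r r^* = pp = p and r^* r = qq = q, using that p and q are self-adjoint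
   idempotents. *)

Definition equiv_below N (R : rel nat) := {in [pred i | i < N] & &, equivalence_rel R}.

Definition no_through k (R : rel nat) := forall i j, R i j -> (i < k) = (j < k).

Section EquivBelow.

Variables (N : nat) (R : rel nat).
Hypothesis eR : equiv_below N R.

Lemma equiv_below_refl i : i < N -> R i i.
Proof. by move=> Hi; case: (eR Hi Hi Hi). Qed.

Lemma equiv_below_trans i j l : i < N -> j < N -> l < N -> R i j -> R j l -> R i l.
Proof. by move=> Hi Hj Hl Rij; case: (eR Hi Hj Hl) => _ /(_ Rij) ->. Qed.

End EquivBelow.

Lemma equiv_below_comp N (R : rel nat) (f : nat -> nat) :
  equiv_below N R -> (forall i, i < N -> f i < N) ->
  equiv_below N (fun i j => R (f i) (f j)).
Proof. by move=> eR fN i j l Hi Hj Hl; apply: eR; apply: fN. Qed.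

Lemma connect_sub_preorder (T : finType) (e S : rel T) :
  reflexive S -> transitive S -> subrel e S -> subrel (connect e) S.
Proof.
move=> Sxx S_tr eS x y /connectP[p]; elim: p x => [|z p IHp] x /=; first by move=> _ ->.
by case/andP=> /eS Sxz /IHp Szy /Szy; apply: S_tr.
Qed.

Section Glue.

Variable k : nat.

Definition glue (E1 E2 : rel nat) : rel nat :=
  fun i j => ((i < k) == (j < k)) && (if i < k then E1 i j else E2 i j).

Lemma glue_no_through E1 E2 : no_through k (glue E1 E2).
Proof. by move=> i j /andP[/eqP]. Qed.

Lemma glue_equiv N E1 E2 :
  equiv_below N E1 -> equiv_below N E2 -> equiv_below N (glue E1 E2).
Proof.
move=> eq1 eq2 i j l Hi Hj Hl.
have [r1 t1] := eq1 i j l Hi Hj Hl; have [r2 t2] := eq2 i j l Hi Hj Hl.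
rewrite /glue eqxx; split; first by case: ifP.
by case/andP=> /eqP <-; case: ifP => [_ /t1 -> | _ /t2 ->].
Qed.

Definition swap_rows i := if i < k then k + i else i - k.

Lemma swap_rows_lt i : i < k + k -> swap_rows i < k + k.
Proof. by rewrite /swap_rows; case: (ltnP i k); lia. Qed.

Lemma swap_rows_side i : i < k + k -> (swap_rows i < k) = (k <= i).
Proof. by rewrite /swap_rows; case: (ltnP i k); lia. Qed.

Lemma glue_swap_rows E1 E2 i j :
  {in [pred i | i < k + k] &, forall i j, E1 (swap_rows i) (swap_rows j) = E1 i j} ->
  {in [pred i | i < k + k] &, forall i j, E2 (swap_rows i) (swap_rows j) = E2 i j} ->
  i < k + k -> j < k + k ->
  glue E1 E2 (swap_rows i) (swap_rows j) = glue E2 E1 i j.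
Proof.
move=> sE1 sE2 Hi Hj.
rewrite /glue (swap_rows_side Hi) (swap_rows_side Hj) sE1 ?sE2 ?inE //.
by case: (ltnP i k); case: (ltnP j k).
Qed.

End Glue.

Section SetPartitions.

Variable N : nat.
Implicit Types (P : {set {set 'I_N}}) (R : rel nat).

Lemma nrel_equiv P : partition P [set: 'I_N] -> equiv_below N (nrel P).
Proof.
move=> partP i j l; rewrite !inE => Hi Hj Hl.
rewrite /nrel !(insubT (fun n => n < N) Hi, insubT (fun n => n < N) Hj,
  insubT (fun n => n < N) Hl).
exact: pblock_equivalence partP _ _ _ (in_setT _) (in_setT _) (in_setT _).
Qed.

Lemma of_rel_equivalence_partition R :
  of_rel N R = equivalence_partition [rel x y : 'I_N | R x y] [set: 'I_N].
Proof.
apply/setP=> B; apply/imsetP/imsetP=> -[x _ ->]; exists x => //.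
  by apply/setP=> y; rewrite !inE.
by apply/setP=> y; rewrite !inE.
Qed.

Lemma nrel_of_rel R : equiv_below N R ->
  forall i j, nrel (of_rel N R) i j = [&& i < N, j < N & R i j].
Proof.
move=> eR i j; rewrite of_rel_equivalence_partition /nrel.
case: insubP => [x _ <- | /negbTE -> //].
case: insubP => [y _ <- | /negbTE ->]; last by rewrite andbF.
rewrite pblock_equivalence_partition ?in_setT ?ltn_ord //.
by move=> ? ? ? _ _ _; apply: eR; rewrite inE.
Qed.

Lemma eq_of_rel R R' : (forall x y : 'I_N, R x y = R' x y) -> of_rel N R = of_rel N R'.
Proof. by move=> eR; apply: eq_imset => x; apply/setP => y; rewrite !inE eR. Qed.

End SetPartitions.

Section ThroughFree.

Variables (A : Type) (w : seq A).
Local Notation k := (size w).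
Local Notation N := (size w + size w).
Implicit Types P Q R S : part w w.

Definition through_free P := equiv_below N (nrel P) /\ no_through k (nrel P).

Lemma through_freeP P :
  partition P [set: 'I_N] -> ~ has_through_block P -> through_free P.
Proof.
move=> partP noTB; split; first exact: nrel_equiv.
have [/eqP cov _ _] := and3P partP.
move=> i j; rewrite /nrel; case: insubP => [x _ <- | //]; case: insubP => [y _ <- | //] yx.
have xB : x \in pblock P x by rewrite mem_pblock cov.
case: (ltnP x k) => hx; case: (ltnP y k) => hy //; case: noTB;
  exists (pblock P x); rewrite ?pblock_mem ?cov //.
- by split; [exists x | exists y]; apply/andP.
- by split; [exists y | exists x]; apply/andP.
Qed.

(* Points of 'I_(k + k + k): the upper row of P, the identified middle row,
   then the lower row of Q. *)
Definition stack P Q : rel 'I_(k + k + k) := fun a b =>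
  [&& a < k + k, b < k + k & nrel P a b] || [&& k <= a, k <= b & nrel Q (a - k) (b - k)].

(* A preorder containing [stack P Q]: a path never leaves the upper or the
   lower row, and never climbs from the middle row to the upper one. *)
Definition stack_reach P Q : rel 'I_(k + k + k) := fun a b =>
  if a < k then (b < k) && nrel P a b
  else if a < k + k then k <= b
  else (k + k <= b) && nrel Q (a - k) (b - k).

Lemma connect_stack P Q : through_free P -> through_free Q ->
  subrel (connect (stack P Q)) (stack_reach P Q).
Proof.
move=> [eP sideP] [eQ sideQ]; apply: connect_sub_preorder.
- move=> a; have := ltn_ord a; rewrite /stack_reach.
  case: (ltnP a k) => ha Ha; first by rewrite (equiv_below_refl eP) //; lia.
  by case: (ltnP a (k + k)) => ha2 //; rewrite (equiv_below_refl eQ) ?andbT //; lia.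
- move=> b a c; have := ltn_ord a; have := ltn_ord b; have := ltn_ord c; rewrite /stack_reach.
  move=> Hc Hb Ha; case: (ltnP a k) => ha.
    case/andP=> hb Pab; rewrite hb => /andP[hc Pbc]; rewrite hc.
    by apply: (equiv_below_trans eP) Pab Pbc; lia.
  case: (ltnP a (k + k)) => ha2.
    move=> hb; have -> : (b < k) = false by lia.
    by case: ifP => _ => [|/andP[+ _]]; lia.
  case/andP=> hb Qab; have -> : (b < k) = false by lia.
  have -> : (b < k + k) = false by lia.
  case/andP=> hc Qbc; rewrite hc.
  by apply: (equiv_below_trans eQ) Qab Qbc; lia.
- move=> a b; have := ltn_ord a; have := ltn_ord b; rewrite /stack /stack_reach.
  move=> Hb Ha; case/orP=> /and3P[h1 h2 h3].
    have := sideP _ _ h3; case: (ltnP a k) => ha; first by move=> <-; rewrite h3.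
    by move=> /esym/negbT; rewrite -leqNgt => hb; rewrite h1.
  have := sideQ _ _ h3; have -> : (a < k) = false by lia.
  case: (ltnP a (k + k)) => ha2 /=.
    by case: ltnP => //; lia.
  by rewrite h3 andbT; lia.
Qed.

Lemma partcomp_glue P Q : through_free P -> through_free Q ->
  partcomp P Q = of_rel N (glue k (nrel P) (nrel Q)).
Proof.
move=> tfP tfQ; apply: eq_of_rel => x y.
have emb_lt (z : 'I_N) : (if z < k then z : nat else z + k) < k + k + k.
  by have := ltn_ord z; case: (ltnP z k); lia.
rewrite -/(stack P Q) (insubT (fun n => n < k + k + k) (emb_lt x)).
rewrite (insubT (fun n => n < k + k + k) (emb_lt y)).
have [Hx Hy] := (ltn_ord x, ltn_ord y).
apply/idP/idP => [/(connect_stack tfP tfQ) | ]; rewrite /stack_reach /stack /glue /=.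
  case: (ltnP x k) => hx; case: (ltnP y k) => hy /=.
  - by rewrite hx hy.
  - by rewrite hx; case/andP; lia.
  - have -> : (x + k < k) = false by lia.
    have -> : (x + k < k + k) = false by lia.
    by case/andP; lia.
  - have -> : (x + k < k) = false by lia.
    have -> : (x + k < k + k) = false by lia.
    by rewrite !addnK => /andP[].
move=> Exy; apply: connect1 => /=; move: Exy.
case: (ltnP x k) => hx; case: (ltnP y k) => hy //= Exy.
  by rewrite Exy; lia.
by apply/orP; right; rewrite !addnK Exy andbT; lia.
Qed.

Lemma nrel_partcomp P Q : through_free P -> through_free Q -> forall i j,
  nrel (partcomp P Q) i j = [&& i < N, j < N & glue k (nrel P) (nrel Q) i j].
Proof.
move=> tfP tfQ; rewrite partcomp_glue //; apply: nrel_of_rel.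
by apply: glue_equiv; [case: tfP | case: tfQ].
Qed.

Lemma through_free_partcomp P Q :
  through_free P -> through_free Q -> through_free (partcomp P Q).
Proof.
move=> tfP tfQ; have [[eP _] [eQ _]] := (tfP, tfQ).
split => [i j l Hi Hj Hl | i j].
  have := glue_equiv k eP eQ Hi Hj Hl; rewrite !inE in Hi Hj Hl.
  by rewrite !nrel_partcomp // Hi Hj Hl.
by rewrite nrel_partcomp // => /and3P[_ _ /glue_no_through].
Qed.

Lemma partcomp_partcomp P Q R S :
  through_free P -> through_free Q -> through_free R -> through_free S ->
  partcomp (partcomp P Q) (partcomp R S) = partcomp P S.
Proof.
move=> tfP tfQ tfR tfS.
rewrite (partcomp_glue (through_free_partcomp tfP tfQ) (through_free_partcomp tfR tfS)).
rewrite (partcomp_glue tfP tfS); apply: eq_of_rel => x y.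
rewrite /glue !nrel_partcomp // /glue !ltn_ord /=.
by case: (x < k); case: (y < k).
Qed.

Lemma nrel_adj P : equiv_below N (nrel P) -> forall i j,
  nrel (adj P) i j = [&& i < N, j < N & nrel P (swap_rows k i) (swap_rows k j)].
Proof. by move=> eP; apply: nrel_of_rel; apply: equiv_below_comp eP _ => i /swap_rows_lt. Qed.

Lemma nrel_swap_rows P : through_free P -> adj P = P ->
  {in [pred i | i < N] &, forall i j, nrel P (swap_rows k i) (swap_rows k j) = nrel P i j}.
Proof.
move=> [eP _] adjP i j; rewrite !inE => Hi Hj.
by rewrite -{2}adjP nrel_adj // Hi Hj.
Qed.

Lemma adj_partcomp P Q : through_free P -> through_free Q -> adj P = P -> adj Q = Q ->
  adj (partcomp P Q) = partcomp Q P.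
Proof.
move=> tfP tfQ adjP adjQ; rewrite (partcomp_glue tfQ tfP); apply: eq_of_rel => x y.
rewrite nrel_partcomp // !swap_rows_lt //.
by rewrite glue_swap_rows ?ltn_ord //; apply: nrel_swap_rows.
Qed.

End ThroughFree.

Theorem lemma3p3 (A : Type) (inv : A -> A) (Hinv : involutive inv)
  (C : forall w w' : seq A, part w w' -> Prop) (HC : is_category inv C)
  (w : seq A) (p q : part w w) (Cp : C w w p) (Cq : C w w q)
  (Pp : projective p) (Pq : projective q)
  (Np : ~ has_through_block p) (Nq : ~ has_through_block q) :
  equivalent C p q.
Proof.
have tf_p : through_free p by apply: through_freeP Np; case: (cat_nc HC Cp).
have tf_q : through_free q by apply: through_freeP Nq; case: (cat_nc HC Cq).
have [[pp adj_p] [qq adj_q]] := (Pp, Pq).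
exists (partcomp p q); split; first exact: (cat_comp HC Cp Cq).
by rewrite adj_partcomp // !partcomp_partcomp.
Qed.
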